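(* Let $\mathcal{X}=\{x_1,\dots,x_n\}$, $S=\mathbb{R}^{\mathcal{X}}$, and let $p$ be a program, $\sigma\in S$ an environment and $t\in\mathbb{R}_{\geq 0}$ a time instant. Then: (1) $(p,\sigma,t)\to^{\star}(\mathit{skip},\sigma',0)$ if and only if $[\![p]\!](\sigma)=\langle [0,t),h,\sigma'\rangle$ for some $h\colon[0,t)\to\mathbb{R}^{\mathcal{X}}$; (2) $(p,\sigma,t)\to^{\star}(\mathit{stop},\sigma',0)$ if and only if there are $t'\in\mathbb{R}_{\geq0}\cup\{\infty\}$ with $t'>t$ and $h\colon[0,t')\to\mathbb{R}^{\mathcal{X}}$ with $h(t)=\sigma'$ such that either $[\![p]\!](\sigma)=\langle[0,t'),h,\sigma''\rangle$ for some $\sigma''$, or $[\![p]\!](\sigma)=\langle[0,t'),h\rangle$.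
   Context: Syntax. Fix variables $\mathcal{X}=\{x_1,\dots,x_n\}$. Linear terms: $s::= r\mid r\cdot x\mid s_1+s_2$ ($r\in\mathbb{R}$, $x\in\mathcal{X}$). Atomic programs: assignments $x:=s$ and differential statements $x_1'=u_1,\dots,x_n'=u_n\ \mathtt{for}\ s$ (abbreviated $\bar x'=\bar u\ \mathtt{for}\ s$), with $u_i,s$ linear terms. Programs: $p::= a\mid p;q\mid \mathtt{if}\ b\ \mathtt{then}\ p\ \mathtt{else}\ q\mid \mathtt{while}\ b\ \mathtt{do}\ p$, with $a$ atomic and $b$ an element of the free Boolean algebra generated by atoms $s_1\le s_2$, $s_1\ge s_2$. An environment is $\sigma\colon\mathcal{X}\to\mathbb{R}$; $s\sigma$, $b\sigma\in\{\top,\bot\}$ denote evaluation; $\sigma\triangledown[\bar v/\bar x]$ is $\sigma$ updated so that $x_i\mapsto v_i$. $\phi_\sigma\colon[0,\infty)\to\mathbb{R}^n$ denotes the solution of the linear ODE system $\bar x'=\bar u$ with initial value $(\sigma(x_1),\dots,\sigma(x_n))$. Small-step semantics: a relation $\to$ on triples $(p,\sigma,t)$ where $p$ is a program or one of the symbols $\mathit{skip},\mathit{stop}$, $\sigma$ an environment, $t\in\mathbb{R}_{\ge0}$, given by the rules: $(x:=s,\sigma,t)\to(\mathit{skip},\sigma\triangledown[s\sigma/x],t)$; $(\bar x'=\bar u\ \mathtt{for}\ s,\sigma,t)\to(\mathit{stop},\sigma\triangledown[\phi_\sigma(t)/\bar x],0)$ if $t<s\sigma$; $(\bar x'=\bar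 u\ \mathtt{for}\ s,\sigma,t)\to(\mathit{skip},\sigma\triangledown[\phi_\sigma(s\sigma)/\bar x],t-s\sigma)$ if $t\ge s\sigma$; $(\mathtt{if}\ b\ \mathtt{then}\ p\ \mathtt{else}\ q,\sigma,t)\to(p,\sigma,t)$ if $b\sigma=\top$ and $\to(q,\sigma,t)$ if $b\sigma=\bot$; $(\mathtt{while}\ b\ \mathtt{do}\ p,\sigma,t)\to(p;\mathtt{while}\ b\ \mathtt{do}\ p,\sigma,t)$ if $b\sigma=\top$ and $\to(\mathit{skip},\sigma,t)$ if $b\sigma=\bot$; if $(p,\sigma,t)\to(\mathit{stop},\sigma',t')$ then $(p;q,\sigma,t)\to(\mathit{stop},\sigma',t')$; if $(p,\sigma,t)\to(\mathit{skip},\sigma',t')$ then $(p;q,\sigma,t)\to(q,\sigma',t')$; if $(p,\sigma,t)\to(p',\sigma',t')$ with $p'\notin\{\mathit{skip},\mathit{stop}\}$ then $(p;q,\sigma,t)\to(p';q,\sigma',t')$. $\to^{\star}$ is the transitive closure of $\to$. Denotational semantics. For a set $S$, let $H_SX=\sum_{d\in\mathbb{R}_{\ge0}} S^{[0,d)}\times X\ \cup\ \sum_{I} S^{I}$, where in the second summand $I$ ranges over intervals $[0,d]$ ($d\in\mathbb{R}_{\ge0}$) and $[0,d)$ ($d\in\mathbb{R}_{\ge0}\cup\{\infty\}$); elements are written $\langle I,e,x\rangle$ and $\langle I,e\rangle$ with $e\colon I\to S$. Concatenation: $\langle[0,d_1),e_1\rangle\frown\langle J,e_2\rangle=\langle J',\lambda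 t.\ \text{if } t<d_1 \text{ then } e_1(t)\text{ else } e_2(t-d_1)\rangle$ with $J'=[0,d_1+d_2)$ if $J=[0,d_2)$ and $J'=[0,d_1+d_2]$ if $J=[0,d_2]$. Unit $\eta(x)=\langle\emptyset,!,x\rangle$. Kleisli lifting of $f\colon X\to H_SY$: $f^\star\langle I,e,x\rangle=\langle (I,e)\frown(J,e'),y\rangle$ if $f(x)=\langle J,e',y\rangle$; $f^\star\langle I,e,x\rangle=(I,e)\frown(J,e')$ if $f(x)=\langle J,e'\rangle$; $f^\star\langle I,e\rangle=\langle I,e\rangle$. For $g\colon X\to Y$, $H_S g=(\eta\cdot g)^\star$. Order on $H_SY$: $a\sqsubseteq b$ iff $a=b$, or $a=\langle I,e\rangle$ and $b$ is $\langle I',e'\rangle$ or $\langle I',e',y\rangle$ with $I\subseteq I'$ and $e=e'|_I$; functions are ordered pointwise. For $f\colon X\to H_S(Y\uplus X)$, $f^\dagger\colon X\to H_SY$ is the least fixpoint of $g\mapsto[\eta,g]^\star\cdot f$. Take $S=\mathbb{R}^{\mathcal{X}}$ and define $[\![p]\!]\colon S\to H_SS$: $[\![x:=s]\!](\sigma)=\eta(\sigma\triangledown[s\sigma/x])$; $[\![\bar x'=\bar u\ \mathtt{for}\ s]\!](\sigma)=\langle[0,s\sigma),\lambda t.\,\sigma\triangledown[\phi_\sigma(t)/\bar x],\sigma\triangledown[\phi_\sigma(s\sigma)/\bar x]\rangle$; $[\![p;q]\!](\sigma)=[\![q]\!]^\star([\![p]\!](\sigma))$; $[\![\mathtt{if}\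 b\ \mathtt{then}\ p\ \mathtt{else}\ q]\!](\sigma)$ is $[\![p]\!](\sigma)$ if $b\sigma=\top$ and $[\![q]\!](\sigma)$ otherwise; $[\![\mathtt{while}\ b\ \mathtt{do}\ p]\!](\sigma)=\big(\lambda\sigma.\ \text{if } b\sigma=\top \text{ then } (H_S\mathsf{inr})([\![p]\!](\sigma)) \text{ else } \eta(\mathsf{inl}\,\sigma)\big)^\dagger(\sigma)$. *)

From Stdlib Require Import Reals Lra Bool Relations.
From Stdlib Require Fin.
From Stdlib Require Import ClassicalEpsilon.
Open Scope R_scope.

Set Implicit Arguments.

Section Syntax.
Variable n : nat.

Definition var := Fin.t n.
Definition env := var -> R.

Inductive lterm : Type :=
| LConst : R -> lterm
| LMul : R -> var -> lterm
| LAdd : lterm -> lterm -> lterm.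

(* syntactic representatives of the free Boolean algebra on the atoms *)
Inductive bexp : Type :=
| BTrue | BFalse
| BLe : lterm -> lterm -> bexp
| BGe : lterm -> lterm -> bexp
| BAnd : bexp -> bexp -> bexp
| BOr : bexp -> bexp -> bexp
| BNot : bexp -> bexp.

Inductive prog : Type :=
| Assign : var -> lterm -> prog
| Ode : (var -> lterm) -> lterm -> prog      (* x_1'=u_1,...,x_n'=u_n for s *)
| Seq : prog -> prog -> prog
| Ite : bexp -> prog -> prog -> prog
| While : bexp -> prog -> prog.

Fixpoint leval (s : lterm) (sg : env) : R :=
  match s with
  | LConst r => r
  | LMul r x => r * sg x
  | LAdd s1 s2 => leval s1 sg + leval s2 sg
  end.

Fixpoint beval (b : bexp) (sg : env) : bool :=
  match b with
  | BTrue => true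
  | BFalse => false
  | BLe s1 s2 => if Rle_dec (leval s1 sg) (leval s2 sg) then true else false
  | BGe s1 s2 => if Rge_dec (leval s1 sg) (leval s2 sg) then true else false
  | BAnd b1 b2 => beval b1 sg && beval b2 sg
  | BOr b1 b2 => beval b1 sg || beval b2 sg
  | BNot b1 => negb (beval b1 sg)
  end.

Definition upd (sg : env) (x : var) (v : R) : env :=
  fun y => if Fin.eq_dec y x then v else sg y.

Definition is_ode_sol (u : var -> lterm) (sg : env) (phi : R -> env) : Prop :=
  phi 0 = sg /\
  forall (t : R) (i : var), derivable_pt_lim (fun tau => phi tau i) t (leval (u i) (phi t)).

Definition ode_sol (u : var -> lterm) (sg : env) : R -> env :=
  epsilon (inhabits (fun _ : R => sg)) (is_ode_sol u sg).

Definition dur (s : lterm) (sg : env) : R := Rmax 0 (leval s sg).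

Lemma dur_nonneg s sg : 0 <= dur s sg.
Proof. unfold dur; apply Rmax_l. Qed.

Inductive cmd : Type := CProg : prog -> cmd | CSkip : cmd | CStop : cmd.

Definition config : Type := (cmd * env * R)%type.

Inductive step : prog -> env -> R -> cmd -> env -> R -> Prop :=
| st_assign x s sg t :
    step (Assign x s) sg t CSkip (upd sg x (leval s sg)) t
| st_ode_stop u s sg t :
    t < dur s sg -> step (Ode u s) sg t CStop (ode_sol u sg t) 0
| st_ode_skip u s sg t :
    dur s sg <= t -> step (Ode u s) sg t CSkip (ode_sol u sg (dur s sg)) (t - dur s sg)
| st_if_true b p q sg t :
    beval b sg = true -> step (Ite b p q) sg t (CProg p) sg t
| st_if_false b p q sg t :
    beval b sg = false -> step (Ite b p q) sg t (CProg q) sg t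
| st_while_true b p sg t :
    beval b sg = true -> step (While b p) sg t (CProg (Seq p (While b p))) sg t
| st_while_false b p sg t :
    beval b sg = false -> step (While b p) sg t CSkip sg t
| st_seq_stop p q sg t sg' t' :
    step p sg t CStop sg' t' -> step (Seq p q) sg t CStop sg' t'
| st_seq_skip p q sg t sg' t' :
    step p sg t CSkip sg' t' -> step (Seq p q) sg t (CProg q) sg' t'
| st_seq_prog p p' q sg t sg' t' :
    step p sg t (CProg p') sg' t' -> step (Seq p q) sg t (CProg (Seq p' q)) sg' t'.

Definition cfg_step (c c' : config) : Prop :=
  match c, c' with
  | (CProg p, sg, t), (k, sg', t') => step p sg t k sg' t'
  | _, _ => False
  end.

Definition steps : config -> config -> Prop := clos_trans config cfg_step.

End Syntax.

Inductive ext : Type := Fin_ : R -> ext | Inf : ext.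

Definition ext_lt (t : R) (d : ext) : Prop :=
  match d with Fin_ r => t < r | Inf => True end.
Definition ext_nn (d : ext) : Prop :=
  match d with Fin_ r => 0 <= r | Inf => True end.
Definition ext_add (r : R) (d : ext) : ext :=
  match d with Fin_ r' => Fin_ (r + r') | Inf => Inf end.

Definition Pco (d : ext) (t : R) : Prop := 0 <= t /\ ext_lt t d.
Definition Pcc (d : R) (t : R) : Prop := 0 <= t /\ t <= d.
Definition Dom (P : R -> Prop) : Type := {t : R | P t}.

Section Monad.
Variable S : Type.

(* <[0,d),e,x>  |  <[0,d),e> (d possibly oo)  |  <[0,d],e> *)
Inductive H (X : Type) : Type :=
| Hconv : forall d : R, 0 <= d -> (Dom (Pco (Fin_ d)) -> S) -> X -> H X
| Hdiv_open : forall d : ext, ext_nn d -> (Dom (Pco d) -> S) -> H X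
| Hdiv_closed : forall d : R, 0 <= d -> (Dom (Pcc d) -> S) -> H X.

Arguments Hconv {X}.
Arguments Hdiv_open {X}.
Arguments Hdiv_closed {X}.

Lemma empty_dom (t : R) : Pco (Fin_ 0) t -> False.
Proof. unfold Pco, ext_lt; intros [H1 H2]; lra. Qed.

Definition empty_traj : Dom (Pco (Fin_ 0)) -> S :=
  fun z => False_rect S (empty_dom (proj2_sig z)).

Definition eta {X} (x : X) : H X := Hconv 0 (Rle_refl 0) empty_traj x.

Definition glue {P2 P3 : R -> Prop} (d1 : R) (e1 : Dom (Pco (Fin_ d1)) -> S)
  (e2 : Dom P2 -> S) (H0 : forall t, P3 t -> 0 <= t)
  (Hs : forall t, P3 t -> ~ t < d1 -> P2 (t - d1)) : Dom P3 -> S :=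
  fun z =>
    match Rlt_dec (proj1_sig z) d1 with
    | left lt => e1 (exist _ (proj1_sig z) (conj (H0 _ (proj2_sig z)) lt))
    | right nlt => e2 (exist _ (proj1_sig z - d1) (Hs _ (proj2_sig z) nlt))
    end.

Lemma Pco_nn d t : Pco d t -> 0 <= t.
Proof. intros [H1 _]; exact H1. Qed.
Lemma Pcc_nn d t : Pcc d t -> 0 <= t.
Proof. intros [H1 _]; exact H1. Qed.

Lemma shift_co (d1 : R) (d2 : ext) t :
  Pco (ext_add d1 d2) t -> ~ t < d1 -> Pco d2 (t - d1).
Proof.
  destruct d2; unfold Pco, ext_add, ext_lt; simpl; intros [H1 H2] H3; split; lra.
Qed.
Lemma shift_cc (d1 d2 : R) t :
  Pcc (d1 + d2) t -> ~ t < d1 -> Pcc d2 (t - d1).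
Proof. unfold Pcc; intros [H1 H2] H3; split; lra. Qed.

Lemma add_nn (d1 d2 : R) : 0 <= d1 -> 0 <= d2 -> 0 <= d1 + d2.
Proof. intros; lra. Qed.
Lemma ext_add_nn (d1 : R) (d2 : ext) : 0 <= d1 -> ext_nn d2 -> ext_nn (ext_add d1 d2).
Proof. destruct d2; simpl; intros; auto; lra. Qed.

Definition concat {Y} (d1 : R) (Hd1 : 0 <= d1) (e1 : Dom (Pco (Fin_ d1)) -> S)
  (y : H Y) : H Y :=
  match y with
  | Hconv d2 Hd2 e2 x =>
      Hconv (d1 + d2) (@add_nn d1 d2 Hd1 Hd2)
        (glue e1 e2 (@Pco_nn (Fin_ (d1 + d2))) (@shift_co d1 (Fin_ d2))) x
  | Hdiv_open d2 Hd2 e2 =>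
      Hdiv_open (ext_add d1 d2) (@ext_add_nn d1 d2 Hd1 Hd2)
        (glue e1 e2 (@Pco_nn (ext_add d1 d2)) (@shift_co d1 d2))
  | Hdiv_closed d2 Hd2 e2 =>
      Hdiv_closed (d1 + d2) (@add_nn d1 d2 Hd1 Hd2)
        (glue e1 e2 (@Pcc_nn (d1 + d2)) (@shift_cc d1 d2))
  end.

Definition bind {X Y} (f : X -> H Y) (a : H X) : H Y :=
  match a with
  | Hconv d Hd e x => concat Hd e (f x)
  | Hdiv_open d Hd e => Hdiv_open d Hd e
  | Hdiv_closed d Hd e => Hdiv_closed d Hd e
  end.

Definition Hmap {X Y} (g : X -> Y) : H X -> H Y := bind (fun x => eta (g x)).

Definition hdom {Y} (b : H Y) : R -> Prop :=
  match b with
  | Hconv d _ _ _ => Pco (Fin_ d)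
  | Hdiv_open d _ _ => Pco d
  | Hdiv_closed d _ _ => Pcc d
  end.

Definition htraj {Y} (b : H Y) : Dom (hdom b) -> S :=
  match b return Dom (hdom b) -> S with
  | Hconv _ _ e _ => e
  | Hdiv_open _ _ e => e
  | Hdiv_closed _ _ e => e
  end.

Definition is_div {Y} (b : H Y) : Prop :=
  match b with Hconv _ _ _ _ => False | _ => True end.

Definition sub_traj {P P' : R -> Prop} (e : Dom P -> S) (e' : Dom P' -> S) : Prop :=
  forall t (pt : P t), exists pt' : P' t, e (exist _ t pt) = e' (exist _ t pt').

Definition le_H {Y} (a b : H Y) : Prop :=
  a = b \/ (is_div a /\ sub_traj (htraj a) (htraj b)).

Definition le_fun {X Y} (f g : X -> H Y) : Prop := forall x, le_H (f x) (g x).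

Definition dagger_F {X Y} (f : X -> H (Y + X)) (g : X -> H Y) : X -> H Y :=
  fun x => bind (fun z => match z with inl y => eta y | inr x' => g x' end) (f x).

Definition is_lfp {X Y} (f : X -> H (Y + X)) (g : X -> H Y) : Prop :=
  dagger_F f g = g /\ forall g', dagger_F f g' = g' -> le_fun g g'.

Definition bottom_fun {X Y} : X -> H Y :=
  fun _ => Hdiv_open (Fin_ 0) (Rle_refl 0) empty_traj.

Definition dagger {X Y} (f : X -> H (Y + X)) : X -> H Y :=
  epsilon (inhabits bottom_fun) (is_lfp f).

End Monad.

Arguments Hconv {S X}.
Arguments Hdiv_open {S X}.
Arguments Hdiv_closed {S X}.
Arguments eta {S X}.

Fixpoint denot {n : nat} (p : prog n) : env n -> H (env n) (env n) :=
  match p with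
  | Assign x s => fun sg => eta (upd sg x (leval s sg))
  | Ode u s => fun sg =>
      Hconv (dur s sg) (dur_nonneg s sg)
        (fun z => ode_sol u sg (proj1_sig z)) (ode_sol u sg (dur s sg))
  | Seq p1 p2 => fun sg => bind (denot p2) (denot p1 sg)
  | Ite b p1 p2 => fun sg => if beval b sg then denot p1 sg else denot p2 sg
  | While b p1 =>
      dagger (fun sg => if beval b sg then Hmap inr (denot p1 sg) else eta (inl sg))
  end.

From Stdlib Require Import Reals Relations Arith Lra Lia.
From Stdlib Require Import ClassicalEpsilon ProofIrrelevance FunctionalExtensionality.
Open Scope R_scope.

(** Both semantics are compared through two observations of an element [a] of
    [H_S X]: [returns a d x] (that is, [a = <[0,d), e, x>]) and [traj_at a t s]
    (the trajectory of [a] is defined at [t] with value [s]).  Elements whose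
    domain is not a closed interval [[0,d]] are determined by these observations,
    and so is the order between them.  By induction on the program one proves the
    invariant [adequate p]: [(p, sg, t)] reaches [(skip, s, r)] iff [denot p sg]
    returns [s] after the duration [t - r], and it reaches [(stop, s, 0)] iff the
    trajectory of [denot p sg] passes through [s] at time [t].  For a loop, the
    observations of its unrolling are defined inductively; by completeness of the
    reals the times at which the trajectory is defined form an interval [[0,D)],
    so some element realises them.  That element is a fixpoint of the loop
    functional lying below every fixpoint, hence it is the dagger. *)

(** * Observations of [H_S X] *)

Lemma Pco_inj (d d' : ext) :
  ext_nn d -> ext_nn d' -> (forall t, Pco d t <-> Pco d' t) -> d = d'.
Proof.
  unfold Pco, ext_lt. intros Hd Hd' Hp.
  destruct d as [r|], d' as [r'|]; simpl in Hd, Hd'; auto.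
  - destruct (Rtotal_order r r') as [l|[->|l]]; auto; exfalso.
    + assert (Hr := proj2 (Hp r) (conj Hd l)). lra.
    + assert (Hr := proj1 (Hp r') (conj Hd' l)). lra.
  - assert (Hr := proj2 (Hp r) (conj Hd I)). lra.
  - assert (Hr := proj1 (Hp r') (conj Hd' I)). lra.
Qed.

Lemma Pcc_not_Pco (d : R) (D : ext) : 0 <= d -> ~ (forall t, Pcc d t <-> Pco D t).
Proof.
  unfold Pcc, Pco, ext_lt. intros Hd Hp. destruct D as [r|]; simpl in Hp.
  - destruct (proj1 (Hp d) (conj Hd (Rle_refl d))) as [_ Hr].
    assert (Hm : 0 <= (d + r) / 2 /\ (d + r) / 2 < r) by lra.
    apply Hp in Hm. lra.
  - assert (Hm : 0 <= d + 1 /\ True) by (split; [lra|exact I]).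
    apply Hp in Hm. lra.
Qed.

Section Observations.
Context {S : Type}.

Definition returns {X} (a : H S X) (d : R) (x : X) : Prop :=
  match a with Hconv d' _ _ x' => d = d' /\ x = x' | _ => False end.

Definition traj_at {X} (a : H S X) (t : R) (s : S) : Prop :=
  exists pt : hdom a t, htraj a (exist _ t pt) = s.

Definition right_open {X} (a : H S X) : Prop :=
  match a with Hdiv_closed _ _ _ => False | _ => True end.

Lemma glue_traj_at {P2 P3 : R -> Prop} (d1 : R) (e1 : Dom (Pco (Fin_ d1)) -> S)
  (e2 : Dom P2 -> S) (H0 : forall t, P3 t -> 0 <= t)
  (Hs : forall t, P3 t -> ~ t < d1 -> P2 (t - d1))
  (HP : forall t, 0 <= t -> t < d1 -> P3 t)
  (HP2 : forall t, d1 <= t -> P2 (t - d1) -> P3 t) t s :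
  (exists pt : P3 t, glue e1 e2 H0 Hs (exist _ t pt) = s) <->
  (exists pt : Pco (Fin_ d1) t, e1 (exist _ t pt) = s) \/
  (d1 <= t /\ exists pt : P2 (t - d1), e2 (exist _ (t - d1) pt) = s).
Proof.
  unfold glue; simpl. split.
  - intros [pt E]. destruct (Rlt_dec t d1) as [l|nl].
    + left. exists (conj (H0 t pt) l). exact E.
    + right. split; [lra|]. exists (Hs t pt nl). exact E.
  - intros [[[pt1 pt2] E]|[Hle [pt E]]].
    + exists (HP t pt1 pt2). simpl in pt2. destruct (Rlt_dec t d1) as [l|nl]; [|contradiction].
      rewrite <- E. do 2 f_equal. apply proof_irrelevance.
    + exists (HP2 t Hle pt). destruct (Rlt_dec t d1) as [l|nl]; [exfalso; lra|].
      rewrite <- E. do 2 f_equal. apply proof_irrelevance.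
Qed.

Lemma concat_traj_at {Y} d (Hd : 0 <= d) (e : Dom (Pco (Fin_ d)) -> S) (y : H S Y) t s :
  traj_at (concat Hd e y) t s <->
  (exists pt : Pco (Fin_ d) t, e (exist _ t pt) = s) \/ (d <= t /\ traj_at y (t - d) s).
Proof.
  destruct y as [d2 Hd2 e2 x|d2 Hd2 e2|d2 Hd2 e2]; unfold traj_at; simpl; apply glue_traj_at.
  all: try destruct d2; unfold Pco, Pcc, ext_lt, ext_add in *; simpl in *.
  all: intros; try split; try tauto; try lra.
  all: match goal with h : _ /\ _ |- _ => destruct h end; lra.
Qed.

Lemma concat_returns {Y} d (Hd : 0 <= d) (e : Dom (Pco (Fin_ d)) -> S) (y : H S Y) t x :
  returns (concat Hd e y) t x <-> exists d2, returns y d2 x /\ t = d + d2.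
Proof.
  destruct y; simpl; split; intros h; try contradiction.
  - destruct h as [-> ->]; eauto.
  - destruct h as [d2 [[-> ->] ->]]; auto.
  - destruct h as [? [[] _]].
  - destruct h as [? [[] _]].
Qed.

Lemma bind_returns {X Y} (k : X -> H S Y) (a : H S X) d y :
  returns (bind k a) d y <->
  exists d1 x d2, returns a d1 x /\ returns (k x) d2 y /\ d = d1 + d2.
Proof.
  destruct a as [d1 Hd e x| |]; simpl.
  - rewrite concat_returns. split.
    + intros [d2 [H1 H2]]. exists d1, x, d2. auto.
    + intros [? [? [d2 [[-> ->] [H1 H2]]]]]. eauto.
  - split; [contradiction|]. intros [? [? [? [[] _]]]].
  - split; [contradiction|]. intros [? [? [? [[] _]]]].
Qed.

Lemma bind_traj_at {X Y} (k : X -> H S Y) (a : H S X) t s :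
  traj_at (bind k a) t s <->
  traj_at a t s \/ exists d1 x, returns a d1 x /\ d1 <= t /\ traj_at (k x) (t - d1) s.
Proof.
  destruct a as [d1 Hd e x|d1 Hd e|d1 Hd e]; simpl.
  - rewrite concat_traj_at. unfold traj_at at 2; simpl. split.
    + intros [H1|[H1 H2]]; [left; auto|right; exists d1, x; auto].
    + intros [H1|[? [? [[-> ->] [H1 H2]]]]]; auto.
  - split; [tauto|]. intros [H1|[? [? [[] _]]]]; auto.
  - split; [tauto|]. intros [H1|[? [? [[] _]]]]; auto.
Qed.

Lemma bind_right_open {X Y} (k : X -> H S Y) (a : H S X) :
  right_open a -> (forall x, right_open (k x)) -> right_open (bind k a).
Proof.
  intros Ha Hk. destruct a as [d Hd e x| |]; simpl in *; auto.
  specialize (Hk x). destruct (k x); simpl in *; auto.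
Qed.

Lemma eta_traj_at {X} {x : X} {t s} : ~ traj_at (@eta S X x) t s.
Proof. intros [[p1 p2] _]. simpl in p2. lra. Qed.

Lemma Hmap_returns {X Y} (f : X -> Y) (a : H S X) d y :
  returns (Hmap f a) d y <-> exists x, returns a d x /\ y = f x.
Proof.
  unfold Hmap. rewrite bind_returns. split.
  - intros (d1 & x & d2 & Hr & [-> ->] & ->). exists x. rewrite Rplus_0_r. auto.
  - intros (x & Hr & ->). exists d, x, 0. rewrite Rplus_0_r. simpl. auto.
Qed.

Lemma Hmap_traj_at {X Y} (f : X -> Y) (a : H S X) t s :
  traj_at (Hmap f a) t s <-> traj_at a t s.
Proof.
  unfold Hmap. rewrite bind_traj_at. split.
  - intros [Hs|(d1 & x & _ & _ & Hs)]; [exact Hs|destruct (eta_traj_at Hs)].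
  - intros Hs. left. exact Hs.
Qed.

Lemma traj_at_nonneg {X} {a : H S X} {t s} : traj_at a t s -> 0 <= t.
Proof. destruct a; intros [[p1 p2] _]; exact p1. Qed.

Lemma traj_at_functional {X} {a : H S X} {t s1 s2} :
  traj_at a t s1 -> traj_at a t s2 -> s1 = s2.
Proof. intros [p1 <-] [p2 <-]. repeat f_equal. apply proof_irrelevance. Qed.

Lemma returns_functional {X} {a : H S X} {d1 x1 d2 x2} :
  returns a d1 x1 -> returns a d2 x2 -> d1 = d2 /\ x1 = x2.
Proof. destruct a; simpl; intuition congruence. Qed.

Lemma returns_dom {X} {a : H S X} {d x} : returns a d x ->
  0 <= d /\ forall t, (exists s, traj_at a t s) <-> 0 <= t < d.
Proof.
  destruct a as [d' Hd e x'| |]; simpl; try contradiction. intros [-> ->].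
  split; auto. intros t; split.
  - intros [s [[p1 p2] _]]. simpl in p2. lra.
  - intros [p1 p2]. exists (e (exist _ t (conj p1 p2))), (conj p1 p2). reflexivity.
Qed.

Lemma returns_after_traj {X} {a : H S X} {d x t s} :
  returns a d x -> traj_at a t s -> t < d.
Proof.
  intros Hr Ht. destruct (returns_dom Hr) as [_ Hd].
  assert (0 <= t < d) by (apply Hd; eauto). lra.
Qed.

Lemma traj_at_down {X} {a : H S X} {t s t'} :
  traj_at a t s -> 0 <= t' <= t -> exists s', traj_at a t' s'.
Proof.
  intros [pt _] Ht'.
  assert (pt' : hdom a t').
  { destruct a as [d| [d|] |d]; simpl in *; unfold Pco, Pcc, ext_lt in *; try lra;
      destruct pt; split; lra. }
  exists (htraj a (exist _ t' pt')), pt'. reflexivity.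
Qed.

Lemma traj_at_open {X} {a : H S X} {t s} :
  right_open a -> traj_at a t s -> exists t' s', t < t' /\ traj_at a t' s'.
Proof.
  intros Ha [pt _].
  assert (exists t', t < t' /\ hdom a t') as [t' [Hlt pt']].
  { destruct a as [d| [d|] |d]; simpl in *; unfold Pco, ext_lt in *; try contradiction;
      destruct pt as [p1 p2].
    - exists ((t + d) / 2); split; [lra|split; lra].
    - exists ((t + d) / 2); split; [lra|split; lra].
    - exists (t + 1); split; [lra|split; auto; lra]. }
  exists t', (htraj a (exist _ t' pt')). split; auto. exists pt'. reflexivity.
Qed.

Lemma sub_traj_eq {P : R -> Prop} (e e' : Dom P -> S) : sub_traj e e' -> e = e'.
Proof.
  intros He. apply functional_extensionality. intros [t pt].
  destruct (He t pt) as [pt' ->]. repeat f_equal. apply proof_irrelevance.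
Qed.

Lemma sub_traj_dom {P P' : R -> Prop} {e : Dom P -> S} {e' : Dom P' -> S} :
  sub_traj e e' -> forall t, P t -> P' t.
Proof. intros He t pt. destruct (He t pt) as [pt' _]. exact pt'. Qed.

Lemma le_H_antisym {X} (a b : H S X) : right_open b -> le_H a b -> le_H b a -> a = b.
Proof.
  intros Hb [E|[Ha Hab]] [E'|[Hb' Hba]]; auto.
  assert (Hdom : forall t, hdom a t <-> hdom b t)
    by (intros t; split; [apply (sub_traj_dom Hab)|apply (sub_traj_dom Hba)]).
  destruct b as [|D HD e'|]; try contradiction.
  destruct a as [|d Hd e|d Hd e]; try contradiction.
  - assert (d = D) as <- by (apply Pco_inj; auto).
    assert (Hd = HD) as <- by apply proof_irrelevance.
    f_equal. apply sub_traj_eq. exact Hab.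
  - exfalso. exact (Pcc_not_Pco d D Hd Hdom).
Qed.

Lemma le_H_of_obs {X} (a b : H S X) : right_open a ->
  (forall d x, returns a d x -> returns b d x) ->
  (forall t s, traj_at a t s -> traj_at b t s) -> le_H a b.
Proof.
  intros Ha Hret Htraj.
  assert (Hsub : sub_traj (htraj a) (htraj b)).
  { intros t pt. destruct (Htraj t _ (ex_intro _ pt eq_refl)) as [pt' E].
    exists pt'. symmetry. exact E. }
  destruct a as [d Hd e x|d Hd e|]; try contradiction.
  - left. assert (Hb := Hret d x (conj eq_refl eq_refl)).
    destruct b as [d' Hd' e' x'| |]; simpl in Hb; try contradiction.
    destruct Hb as [<- <-]. assert (Hd = Hd') as <- by apply proof_irrelevance.
    f_equal. apply sub_traj_eq. exact Hsub.
  - right. split; [exact I|exact Hsub].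
Qed.

Lemma eq_of_obs {X} (a b : H S X) : right_open a -> right_open b ->
  (forall d x, returns a d x <-> returns b d x) ->
  (forall t s, traj_at a t s <-> traj_at b t s) -> a = b.
Proof.
  intros Ha Hb Hret Htraj. apply le_H_antisym; auto; apply le_H_of_obs; auto;
    intros; [apply Hret|apply Htraj|apply Hret|apply Htraj]; auto.
Qed.

End Observations.

Section Realization.
Context {S X : Type}.
Variable ret : R -> X -> Prop.
Variable traj : R -> S -> Prop.
Hypothesis traj_nonneg : forall t s, traj t s -> 0 <= t.
Hypothesis traj_functional : forall t s1 s2, traj t s1 -> traj t s2 -> s1 = s2.
Hypothesis traj_down : forall t s t', traj t s -> 0 <= t' <= t -> exists s', traj t' s'.
Hypothesis traj_open : forall t s, traj t s -> exists t' s', t < t' /\ traj t' s'.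
Hypothesis ret_functional :
  forall d1 x1 d2 x2, ret d1 x1 -> ret d2 x2 -> d1 = d2 /\ x1 = x2.
Hypothesis ret_dom :
  forall d x, ret d x -> 0 <= d /\ forall t, (exists s, traj t s) <-> 0 <= t < d.

Lemma traj_dom_Pco : exists D, ext_nn D /\ forall t, (exists s, traj t s) <-> Pco D t.
Proof.
  set (E := fun t => exists s, traj t s).
  assert (E_nonneg : forall t, E t -> 0 <= t)
    by (intros t [s Hs]; eapply traj_nonneg; eauto).
  assert (E_below : forall t t', 0 <= t -> t < t' -> E t' -> E t).
  { intros t t' Ht Hlt [s' Hs']. eapply traj_down; eauto. lra. }
  assert (E_ub : forall t, ~ (exists t', E t' /\ t < t') -> is_upper_bound E t).
  { intros t Hn y Hy. destruct (Rle_dec y t); auto. exfalso. apply Hn. exists y. split; auto; lra. }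
  destruct (classic (exists t, E t)) as [Hne|Hempty].
  2: { exists (Fin_ 0). split; [simpl; lra|]. intros t; split.
       - intros Ht. exfalso. apply Hempty. exists t. exact Ht.
       - intros [Ht0 Ht]. simpl in Ht. lra. }
  destruct (classic (bound E)) as [Hbd|Hunb].
  - destruct (completeness E Hbd Hne) as [m [Hub Hlub]].
    exists (Fin_ m). split.
    + destruct Hne as [t0 Ht0]. specialize (E_nonneg t0 Ht0). specialize (Hub t0 Ht0). simpl; lra.
    + intros t; split.
      * intros [s Hs]. destruct (traj_open _ _ Hs) as [t' [s' [Hlt Hs']]].
        assert (t' <= m) by (apply Hub; exists s'; exact Hs').
        split; [apply E_nonneg; exists s; exact Hs|simpl; lra].
      * intros [Ht Htm]. simpl in Htm.
        destruct (classic (exists t', E t' /\ t < t')) as [[t' [Ht' Hlt]]|Hn].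
        -- exact (E_below t t' Ht Hlt Ht').
        -- specialize (Hlub t (E_ub t Hn)). lra.
  - exists Inf. split; [exact I|]. intros t; split.
    + intros Ht. split; [exact (E_nonneg t Ht)|exact I].
    + intros [Ht _].
      destruct (classic (exists t', E t' /\ t < t')) as [[t' [Ht' Hlt]]|Hn].
      * exact (E_below t t' Ht Hlt Ht').
      * exfalso. apply Hunb. exists t. exact (E_ub t Hn).
Qed.

Lemma realize_traj (D : ext) : (forall t, (exists s, traj t s) <-> Pco D t) ->
  {h : Dom (Pco D) -> S | forall t s, (exists pt, h (exist _ t pt) = s) <-> traj t s}.
Proof.
  intros Hdom.
  exists (fun z => proj1_sig (constructive_indefinite_description _
                              (proj2 (Hdom _) (proj2_sig z)))).
  intros t s; split.
  - intros [pt <-]. exact (proj2_sig (constructive_indefinite_description _ _)).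
  - intros Hs. exists (proj1 (Hdom t) (ex_intro _ s Hs)).
    eapply traj_functional; [exact (proj2_sig (constructive_indefinite_description _ _))|exact Hs].
Qed.

Lemma realize : exists a : H S X, right_open a /\
  (forall d x, returns a d x <-> ret d x) /\ (forall t s, traj_at a t s <-> traj t s).
Proof.
  destruct (classic (exists d x, ret d x)) as [[d [x Hret]]|Hnoret].
  - destruct (ret_dom _ _ Hret) as [Hd Hdom].
    destruct (realize_traj (Fin_ d)) as [h Hh].
    { intros t. rewrite Hdom. unfold Pco, ext_lt. tauto. }
    exists (Hconv d Hd h x). split; [exact I|split; [|exact Hh]].
    intros d' x'; simpl; split.
    + intros [-> ->]. exact Hret.
    + intros Hret'. destruct (ret_functional _ _ _ _ Hret' Hret). auto.
  - destruct traj_dom_Pco as [D [HD Hdom]].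
    destruct (realize_traj D Hdom) as [h Hh].
    exists (Hdiv_open D HD h). split; [exact I|split; [|exact Hh]].
    intros d x; simpl; split; [contradiction|]. intros Hret. apply Hnoret. eauto.
Qed.

End Realization.

(** * Loops as least fixpoints *)

Section Loop.
Context {S X : Type}.
Variable guard : X -> bool.
Variable body : X -> H S X.
Hypothesis body_right_open : forall x, right_open (body x).

Definition loop_step (x : X) : H S (X + X) :=
  if guard x then Hmap inr (body x) else eta (inl x).

Inductive loop_returns : X -> R -> X -> Prop :=
| loop_returns_exit x : guard x = false -> loop_returns x 0 x
| loop_returns_iter x d1 x1 d2 y : guard x = true -> returns (body x) d1 x1 ->
    loop_returns x1 d2 y -> loop_returns x (d1 + d2) y.

Inductive loop_traj : X -> R -> S -> Prop :=
| loop_traj_body x t s : guard x = true -> traj_at (body x) t s -> loop_traj x t s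
| loop_traj_iter x d1 x1 t2 s : guard x = true -> returns (body x) d1 x1 ->
    loop_traj x1 t2 s -> loop_traj x (d1 + t2) s.

Lemma loop_returns_nonneg {x d y} : loop_returns x d y -> 0 <= d.
Proof.
  induction 1 as [|x d1 x1 d2 y _ Hr _ IH]; [lra|].
  pose proof (proj1 (returns_dom Hr)). lra.
Qed.

Lemma loop_traj_nonneg {x t s} : loop_traj x t s -> 0 <= t.
Proof.
  induction 1 as [x t s _ Hs|x d1 x1 t2 s _ Hr _ IH]; [exact (traj_at_nonneg Hs)|].
  pose proof (proj1 (returns_dom Hr)). lra.
Qed.

Lemma loop_returns_functional x d1 y1 d2 y2 :
  loop_returns x d1 y1 -> loop_returns x d2 y2 -> d1 = d2 /\ y1 = y2.
Proof.
  intros H1. revert d2 y2.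
  induction H1 as [x Hg|x d1 x1 d2 y Hg Hr H1 IH]; intros d2' y2 H2;
    inversion H2 as [? Hg'|? d1' x1' d2'' ? Hg' Hr' H2']; subst; try congruence.
  - auto.
  - destruct (returns_functional Hr Hr') as [<- <-]. destruct (IH _ _ H2') as [-> ->]. auto.
Qed.

Lemma loop_traj_functional x t s1 s2 : loop_traj x t s1 -> loop_traj x t s2 -> s1 = s2.
Proof.
  intros H1. revert s2.
  induction H1 as [x t s Hg Hs|x d1 x1 t2 s Hg Hr H1 IH]; intros s2 H2;
    inversion H2 as [? ? ? Hg' Hs'|? d1' x1' t2' ? Hg' Hr' H2']; subst.
  - exact (traj_at_functional Hs Hs').
  - pose proof (returns_after_traj Hr' Hs). pose proof (loop_traj_nonneg H2'). lra.
  - pose proof (returns_after_traj Hr Hs'). pose proof (loop_traj_nonneg H1). lra.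
  - destruct (returns_functional Hr Hr') as [<- <-].
    apply IH. replace t2 with t2' by lra. exact H2'.
Qed.

Lemma loop_traj_down x t s t' :
  loop_traj x t s -> 0 <= t' <= t -> exists s', loop_traj x t' s'.
Proof.
  intros H1. revert t'. induction H1 as [x t s Hg Hs|x d1 x1 t2 s Hg Hr H1 IH]; intros t' Ht'.
  - destruct (traj_at_down Hs Ht') as [s' Hs']. exists s'. apply loop_traj_body; assumption.
  - destruct (Rlt_le_dec t' d1) as [Hlt|Hle].
    + destruct (proj2 (proj2 (returns_dom Hr) t') (conj (proj1 Ht') Hlt)) as [s' Hs'].
      exists s'. apply loop_traj_body; assumption.
    + destruct (IH (t' - d1)) as [s' Hs']; [lra|]. exists s'.
      replace t' with (d1 + (t' - d1)) by lra. eapply loop_traj_iter; eassumption.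
Qed.

Lemma loop_traj_open x t s : loop_traj x t s -> exists t' s', t < t' /\ loop_traj x t' s'.
Proof.
  induction 1 as [x t s Hg Hs|x d1 x1 t2 s Hg Hr H1 IH].
  - destruct (traj_at_open (body_right_open x) Hs) as (t' & s' & Hlt & Hs').
    exists t', s'. split; [exact Hlt|apply loop_traj_body; assumption].
  - destruct IH as (t' & s' & Hlt & Hs').
    exists (d1 + t'), s'. split; [lra|eapply loop_traj_iter; eassumption].
Qed.

Lemma loop_returns_dom x d y : loop_returns x d y ->
  0 <= d /\ forall t, (exists s, loop_traj x t s) <-> 0 <= t < d.
Proof.
  intros Hl. split; [exact (loop_returns_nonneg Hl)|].
  induction Hl as [x Hg|x d1 x1 d2 y Hg Hr Hl IH]; intros t; split.
  - intros [s Hs]. inversion Hs; congruence.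
  - lra.
  - intros [s Hs]. pose proof (loop_returns_nonneg Hl).
    inversion Hs as [? ? ? _ Hs'|? d1' x1' t2 ? _ Hr' Hs']; subst.
    + pose proof (returns_after_traj Hr Hs'). pose proof (traj_at_nonneg Hs'). lra.
    + destruct (returns_functional Hr Hr') as [<- <-].
      assert (0 <= t2 < d2) by (apply IH; eauto). pose proof (proj1 (returns_dom Hr)). lra.
  - intros Ht. destruct (Rlt_le_dec t d1) as [Hlt|Hle].
    + destruct (proj2 (proj2 (returns_dom Hr) t) (conj (proj1 Ht) Hlt)) as [s Hs].
      exists s. apply loop_traj_body; assumption.
    + destruct (proj2 (IH (t - d1))) as [s Hs]; [lra|]. exists s.
      replace t with (d1 + (t - d1)) by lra. eapply loop_traj_iter; eassumption.
Qed.

Definition is_loop_sem (x : X) (a : H S X) : Prop :=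
  right_open a /\ (forall d y, returns a d y <-> loop_returns x d y) /\
  (forall t s, traj_at a t s <-> loop_traj x t s).

Lemma loop_sem_exists x : exists a, is_loop_sem x a.
Proof.
  unfold is_loop_sem. apply realize.
  - intros t s. exact loop_traj_nonneg.
  - apply loop_traj_functional.
  - apply loop_traj_down.
  - apply loop_traj_open.
  - apply loop_returns_functional.
  - apply loop_returns_dom.
Qed.

Definition loop_sem (x : X) : H S X := epsilon (inhabits (eta x)) (is_loop_sem x).

Lemma loop_sem_spec x : is_loop_sem x (loop_sem x).
Proof. unfold loop_sem. apply epsilon_spec, loop_sem_exists. Qed.

Lemma loop_sem_right_open x : right_open (loop_sem x).
Proof. apply loop_sem_spec. Qed.

Lemma loop_sem_returns x d y : returns (loop_sem x) d y <-> loop_returns x d y.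
Proof. apply loop_sem_spec. Qed.

Lemma loop_sem_traj_at x t s : traj_at (loop_sem x) t s <-> loop_traj x t s.
Proof. apply loop_sem_spec. Qed.

Lemma dagger_F_right_open (g : X -> H S X) :
  (forall x, right_open (g x)) -> forall x, right_open (dagger_F loop_step g x).
Proof.
  intros Hg x. unfold dagger_F, loop_step. apply bind_right_open.
  - destruct (guard x); [|exact I]. apply bind_right_open; [apply body_right_open|intros; exact I].
  - intros [y|y]; [exact I|apply Hg].
Qed.

Lemma dagger_F_returns (g : X -> H S X) x d y :
  returns (dagger_F loop_step g x) d y <->
  (guard x = false /\ d = 0 /\ y = x) \/
  (guard x = true /\
   exists d1 x1 d2, returns (body x) d1 x1 /\ returns (g x1) d2 y /\ d = d1 + d2).
Proof.
  unfold dagger_F, loop_step. rewrite bind_returns. destruct (guard x).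
  - split.
    + intros (d1 & z & d2 & Hz & Hk & ->). apply Hmap_returns in Hz.
      destruct Hz as (x1 & Hr & ->). right. split; [reflexivity|]. exists d1, x1, d2. auto.
    + intros [(E & _)|(_ & d1 & x1 & d2 & Hr & Hk & ->)]; [discriminate|].
      exists d1, (inr x1), d2. split; [apply Hmap_returns; eauto|auto].
  - split.
    + intros (d1 & z & d2 & [-> ->] & [-> ->] & ->). left. repeat split. lra.
    + intros [(_ & -> & ->)|(E & _)]; [|discriminate].
      exists 0, (inl x), 0. simpl. repeat split. lra.
Qed.

Lemma dagger_F_traj_at (g : X -> H S X) x t s :
  traj_at (dagger_F loop_step g x) t s <->
  guard x = true /\ (traj_at (body x) t s \/
    exists d1 x1, returns (body x) d1 x1 /\ d1 <= t /\ traj_at (g x1) (t - d1) s).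
Proof.
  unfold dagger_F, loop_step. rewrite bind_traj_at. destruct (guard x).
  - rewrite Hmap_traj_at. split.
    + intros [Hs|(d1 & z & Hz & Hd1 & Hs)]; split; auto.
      right. apply Hmap_returns in Hz. destruct Hz as (x1 & Hr & ->). exists d1, x1. auto.
    + intros [_ [Hs|(d1 & x1 & Hr & Hd1 & Hs)]]; [left; exact Hs|right].
      exists d1, (inr x1). split; [apply Hmap_returns; eauto|auto].
  - split.
    + intros [Hs|(d1 & z & [-> ->] & _ & Hs)]; destruct (eta_traj_at Hs).
    + intros [E _]. discriminate.
Qed.

Lemma loop_sem_fixpoint : dagger_F loop_step loop_sem = loop_sem.
Proof.
  apply functional_extensionality. intros x.
  apply eq_of_obs; [apply dagger_F_right_open, loop_sem_right_open|apply loop_sem_right_open| |].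
  - intros d y. rewrite dagger_F_returns, loop_sem_returns. split.
    + intros [(Hg & -> & ->)|(Hg & d1 & x1 & d2 & Hr & Hk & ->)].
      * apply loop_returns_exit. exact Hg.
      * apply loop_sem_returns in Hk. eapply loop_returns_iter; eassumption.
    + intros Hl. inversion Hl as [? Hg|? d1 x1 d2 ? Hg Hr Hl']; subst; [left; auto|right].
      split; [exact Hg|]. exists d1, x1, d2. rewrite loop_sem_returns. auto.
  - intros t s. rewrite dagger_F_traj_at, loop_sem_traj_at. split.
    + intros [Hg [Hs|(d1 & x1 & Hr & Hd1 & Hs)]].
      * apply loop_traj_body; assumption.
      * apply loop_sem_traj_at in Hs. replace t with (d1 + (t - d1)) by lra.
        eapply loop_traj_iter; eassumption.
    + intros Hl. inversion Hl as [? ? ? Hg Hs|? d1 x1 t2 ? Hg Hr Hl']; subst; split; auto.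
      right. exists d1, x1. pose proof (loop_traj_nonneg Hl').
      split; [exact Hr|split; [lra|]].
      rewrite loop_sem_traj_at. replace (d1 + t2 - d1) with t2 by lra. exact Hl'.
Qed.

Lemma loop_sem_least g : dagger_F loop_step g = g -> le_fun loop_sem g.
Proof.
  intros Hfix x. apply le_H_of_obs; [apply loop_sem_right_open| |].
  - intros d y Hr. apply loop_sem_returns in Hr.
    induction Hr as [x Hg|x d1 x1 d2 y Hg Hr Hl IH]; rewrite <- Hfix; apply dagger_F_returns.
    + left. auto.
    + right. split; [exact Hg|]. exists d1, x1, d2. auto.
  - intros t s Hs. apply loop_sem_traj_at in Hs.
    induction Hs as [x t s Hg Hs|x d1 x1 t2 s Hg Hr Hl IH];
      rewrite <- Hfix; apply dagger_F_traj_at; split; auto.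
    right. exists d1, x1. pose proof (loop_traj_nonneg Hl).
    split; [exact Hr|split; [lra|]]. replace (d1 + t2 - d1) with t2 by lra. exact IH.
Qed.

Lemma dagger_loop_step : dagger loop_step = loop_sem.
Proof.
  assert (Hlfp : is_lfp loop_step loop_sem) by exact (conj loop_sem_fixpoint loop_sem_least).
  assert (Hdag : is_lfp loop_step (dagger loop_step)).
  { unfold dagger. apply epsilon_spec. exists loop_sem. exact Hlfp. }
  apply functional_extensionality. intros x. apply le_H_antisym.
  - apply loop_sem_right_open.
  - apply (proj2 Hdag). exact loop_sem_fixpoint.
  - apply (proj2 Hlfp). exact (proj1 Hdag).
Qed.

End Loop.

(** * Small-step reachability *)

Section Operational.
Context {n : nat}.

(* Counting steps provides the measure for the strong induction in
   [while_nsteps_inv]. *)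
Inductive nsteps : nat -> config n -> config n -> Prop :=
| nsteps_refl c : nsteps 0 c c
| nsteps_cons m c c1 c2 : cfg_step c c1 -> nsteps m c1 c2 -> nsteps (S m) c c2.

Definition final (k : cmd n) : Prop := k = CSkip n \/ k = CStop n.

Definition reaches (c : config n) (k : cmd n) (s : env n) (r : R) : Prop :=
  exists m, nsteps m c (k, s, r).

Lemma final_skip : final (CSkip n).
Proof. left; reflexivity. Qed.

Lemma final_stop : final (CStop n).
Proof. right; reflexivity. Qed.

Lemma step_deterministic {p : prog n} {sg t k1 s1 t1 k2 s2 t2} :
  step p sg t k1 s1 t1 -> step p sg t k2 s2 t2 -> k1 = k2 /\ s1 = s2 /\ t1 = t2.
Proof.
  intros H1. revert k2 s2 t2.
  induction H1; intros k2 s2 t2 H2; inversion H2; subst; auto;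
    try congruence; try lra;
    match goal with
    | IH : forall k2 s2 t2, step ?p _ _ _ _ _ -> _, Hp : step ?p _ _ _ _ _ |- _ =>
        destruct (IH _ _ _ Hp) as [E [-> ->]]; try discriminate; try (inversion E; subst)
    end; auto.
Qed.

Lemma nsteps_from_final m (k : cmd n) s r c :
  final k -> nsteps m (k, s, r) c -> m = 0%nat /\ c = (k, s, r).
Proof. intros [-> | ->] Hm; inversion Hm; subst; simpl in *; easy. Qed.

Lemma reaches_final_iff (k1 : cmd n) s1 r1 k s r : final k1 ->
  reaches (k1, s1, r1) k s r <-> k = k1 /\ s = s1 /\ r = r1.
Proof.
  intros Hk. split.
  - intros [m Hm]. apply nsteps_from_final in Hm; auto. destruct Hm as [_ E]. inversion E; auto.
  - intros (-> & -> & ->). exists 0%nat. constructor.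
Qed.

Lemma nsteps_step {p : prog n} {sg t k1 s1 t1 m c} :
  step p sg t k1 s1 t1 -> nsteps m (k1, s1, t1) c -> nsteps (S m) (CProg p, sg, t) c.
Proof. intros Hst Hm. apply nsteps_cons with (c1 := (k1, s1, t1)); assumption. Qed.

Lemma nsteps_prog_final_inv {m} {p : prog n} {sg t k s r} :
  final k -> nsteps m (CProg p, sg, t) (k, s, r) ->
  exists m' k1 s1 t1, m = S m' /\ step p sg t k1 s1 t1 /\ nsteps m' (k1, s1, t1) (k, s, r).
Proof.
  intros Hk Hm. inversion Hm as [E|m' c [[k1 s1] t1] c2 Hst Hrest]; subst.
  - destruct Hk; discriminate.
  - exists m', k1, s1, t1. auto.
Qed.

Lemma reaches_step_iff {p : prog n} {sg t k1 s1 t1} : step p sg t k1 s1 t1 ->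
  forall k s r, final k -> reaches (CProg p, sg, t) k s r <-> reaches (k1, s1, t1) k s r.
Proof.
  intros Hst k s r Hk. split.
  - intros [m Hm].
    destruct (nsteps_prog_final_inv Hk Hm) as (m' & k1' & s1' & t1' & _ & Hst' & Hrest).
    destruct (step_deterministic Hst Hst') as (-> & -> & ->). exists m'. exact Hrest.
  - intros [m Hm]. exists (S m). exact (nsteps_step Hst Hm).
Qed.

Lemma nsteps_succ_clos_trans {m c c'} : nsteps (S m) c c' -> clos_trans _ (@cfg_step n) c c'.
Proof.
  revert c. induction m as [|m IH]; intros c Hm;
    inversion Hm as [|m' c0 c1 c2 Hst Hrest]; subst.
  - inversion Hrest; subst. constructor. exact Hst.
  - econstructor 2; [constructor; exact Hst|apply IH; exact Hrest].
Qed.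

Lemma steps_iff_reaches (p : prog n) sg t k s r : final k ->
  steps (CProg p, sg, t) (k, s, r) <-> reaches (CProg p, sg, t) k s r.
Proof.
  intros Hk. unfold steps, reaches. split.
  - intros Hs. apply clos_trans_t1n in Hs.
    induction Hs as [c c' Hst|c c1 c' Hst Hs [m Hm]].
    + exists 1%nat. econstructor; [exact Hst|constructor].
    + exists (S m). econstructor; eauto.
  - intros [[|m] Hm].
    + inversion Hm; subst. destruct Hk; discriminate.
    + exact (nsteps_succ_clos_trans Hm).
Qed.

Lemma nsteps_seq_inv {m} {p q : prog n} {sg t k s r} : final k ->
  nsteps m (CProg (Seq p q), sg, t) (k, s, r) ->
  (k = CStop n /\ reaches (CProg p, sg, t) (CStop n) s r) \/
  (exists s1 r1 m', reaches (CProg p, sg, t) (CSkip n) s1 r1 /\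
     nsteps m' (CProg q, s1, r1) (k, s, r) /\ (m' < m)%nat).
Proof.
  intros Hk. revert p sg t. induction m as [|m IH]; intros p sg t Hm;
    inversion Hm as [|m' c c1 c2 Hst Hrest]; subst.
  - destruct Hk; discriminate.
  - destruct c1 as [[k1 s1] t1]. simpl in Hst. inversion Hst; subst.
    + apply nsteps_from_final in Hrest; [|exact final_stop].
      destruct Hrest as [-> E]. inversion E; subst.
      left. split; [reflexivity|]. exists 1%nat. eapply nsteps_step; [eassumption|constructor].
    + right. exists s1, t1, m. split; [|split; [exact Hrest|lia]].
      exists 1%nat. eapply nsteps_step; [eassumption|constructor].
    + destruct (IH _ _ _ Hrest) as [[E [m1 H1]]|(s2 & r2 & m2 & [m1 H1] & H2 & Hlt)].
      * left. split; [exact E|]. exists (S m1). eapply nsteps_step; eassumption.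
      * right. exists s2, r2, m2. split; [|split; [exact H2|lia]].
        exists (S m1). eapply nsteps_step; eassumption.
Qed.

Lemma reaches_seq_inv {p q : prog n} {sg t k s r} : final k ->
  reaches (CProg (Seq p q), sg, t) k s r ->
  (k = CStop n /\ reaches (CProg p, sg, t) (CStop n) s r) \/
  (exists s1 r1, reaches (CProg p, sg, t) (CSkip n) s1 r1 /\ reaches (CProg q, s1, r1) k s r).
Proof.
  intros Hk [m Hm].
  destruct (nsteps_seq_inv Hk Hm) as [Hstop|(s1 & r1 & m' & H1 & H2 & _)].
  - left. exact Hstop.
  - right. exists s1, r1. split; [exact H1|exists m'; exact H2].
Qed.

Lemma reaches_seq_stop (p q : prog n) sg t s r :
  reaches (CProg p, sg, t) (CStop n) s r -> reaches (CProg (Seq p q), sg, t) (CStop n) s r.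
Proof.
  intros [m Hm]. exists m. revert p sg t Hm. induction m as [|m IH]; intros p sg t Hm;
    inversion Hm as [|m' c c1 c2 Hst Hrest]; subst.
  destruct c1 as [[[p'| |] s1] t1]; simpl in Hst.
  - eapply nsteps_step; [apply st_seq_prog; exact Hst|apply IH; exact Hrest].
  - apply nsteps_from_final in Hrest; [destruct Hrest; discriminate|exact final_skip].
  - apply nsteps_from_final in Hrest; [|exact final_stop].
    destruct Hrest as [-> E]. inversion E; subst.
    eapply nsteps_step; [apply st_seq_stop; exact Hst|constructor].
Qed.

Lemma reaches_seq_skip (p q : prog n) sg t s1 r1 k s r :
  reaches (CProg p, sg, t) (CSkip n) s1 r1 -> reaches (CProg q, s1, r1) k s r ->
  reaches (CProg (Seq p q), sg, t) k s r.
Proof.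
  intros [m Hm] [m2 Hm2]. exists (m + m2)%nat. revert p sg t Hm.
  induction m as [|m IH]; intros p sg t Hm; inversion Hm as [|m' c c1 c2 Hst Hrest]; subst.
  destruct c1 as [[[p'| |] s2] t2]; simpl in Hst.
  - eapply nsteps_step; [apply st_seq_prog; exact Hst|apply IH; exact Hrest].
  - apply nsteps_from_final in Hrest; [|exact final_skip].
    destruct Hrest as [-> E]. inversion E; subst.
    eapply nsteps_step; [apply st_seq_skip; exact Hst|exact Hm2].
  - apply nsteps_from_final in Hrest; [destruct Hrest; discriminate|exact final_stop].
Qed.

End Operational.

(** * Adequacy *)

Record adequate {n} (p : prog n) : Prop := {
  adequate_right_open : forall sg, right_open (denot p sg);
  adequate_skip : forall sg t s r, 0 <= t ->
    reaches (CProg p, sg, t) (CSkip n) s r <->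
    exists d, returns (denot p sg) d s /\ d <= t /\ r = t - d;
  adequate_stop : forall sg t s r, 0 <= t ->
    reaches (CProg p, sg, t) (CStop n) s r <-> r = 0 /\ traj_at (denot p sg) t s
}.

Arguments adequate_right_open {n p}.
Arguments adequate_skip {n p}.
Arguments adequate_stop {n p}.

Lemma adequate_assign n (x : var n) e : adequate (Assign x e).
Proof.
  split; [intros; exact I| |]; intros sg t s r Ht;
    rewrite (reaches_step_iff (st_assign x e sg t)), reaches_final_iff
      by auto using final_skip, final_stop; simpl.
  - split.
    + intros (_ & -> & ->). exists 0. repeat split; lra.
    + intros (d & [-> ->] & _ & ->). repeat split. lra.
  - split.
    + intros [E _]. discriminate.
    + intros [_ Hs]. destruct (eta_traj_at Hs).
Qed.

Lemma adequate_ode n (u : var n -> lterm n) e : adequate (Ode u e).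
Proof.
  split; [intros; exact I| |]; intros sg t s r Ht; unfold traj_at; simpl;
    destruct (Rlt_le_dec t (dur e sg)) as [Hlt|Hle];
    [ rewrite (reaches_step_iff (st_ode_stop u e sg Hlt)), reaches_final_iff
    | rewrite (reaches_step_iff (st_ode_skip u e sg Hle)), reaches_final_iff
    | rewrite (reaches_step_iff (st_ode_stop u e sg Hlt)), reaches_final_iff
    | rewrite (reaches_step_iff (st_ode_skip u e sg Hle)), reaches_final_iff ];
    auto using final_skip, final_stop.
  - split; [intros [E _]; discriminate|intros (d & [-> _] & Hd & _); lra].
  - split; [intros (_ & -> & ->)|intros (d & [-> ->] & _ & ->)]; eauto.
  - split.
    + intros (_ & -> & ->). split; [reflexivity|]. exists (conj Ht Hlt). reflexivity.
    + intros [-> [pt <-]]. auto.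
  - split; [intros [E _]; discriminate|intros [_ [[_ Hlt] _]]; simpl in Hlt; lra].
Qed.

Lemma adequate_ite n b (p1 p2 : prog n) :
  adequate p1 -> adequate p2 -> adequate (Ite b p1 p2).
Proof.
  intros A1 A2.
  assert (Hstep : forall sg t,
            step (Ite b p1 p2) sg t (CProg (if beval b sg then p1 else p2)) sg t).
  { intros sg t. destruct (beval b sg) eqn:Eb; [apply st_if_true|apply st_if_false]; exact Eb. }
  split; intros sg; simpl; [destruct (beval b sg); apply adequate_right_open; assumption| |];
    intros t s r Ht; rewrite (reaches_step_iff (Hstep sg t)) by auto using final_skip, final_stop;
    destruct (beval b sg); [apply A1|apply A2|apply A1|apply A2]; exact Ht.
Qed.

Lemma adequate_seq n (p1 p2 : prog n) :
  adequate p1 -> adequate p2 -> adequate (Seq p1 p2).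
Proof.
  intros A1 A2. split; intros sg; simpl.
  - apply bind_right_open; [apply A1|intros x; apply A2].
  - intros t s r Ht. split.
    + intros Hr.
      destruct (reaches_seq_inv final_skip Hr) as [[E _]|(s1 & r1 & H1 & H2)]; [discriminate|].
      apply (adequate_skip A1) in H1; [|exact Ht]. destruct H1 as (d1 & Hr1 & Hd1 & ->).
      apply (adequate_skip A2) in H2; [|lra]. destruct H2 as (d2 & Hr2 & Hd2 & ->).
      exists (d1 + d2). split; [apply bind_returns; exists d1, s1, d2; auto|split; lra].
    + intros (d & Hr & Hd & ->). apply bind_returns in Hr.
      destruct Hr as (d1 & s1 & d2 & Hr1 & Hr2 & ->).
      assert (0 <= d2) by exact (proj1 (returns_dom Hr2)).
      apply reaches_seq_skip with s1 (t - d1).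
      * apply (adequate_skip A1); [exact Ht|]. exists d1. repeat split; auto; lra.
      * replace (t - (d1 + d2)) with (t - d1 - d2) by lra.
        apply (adequate_skip A2); [lra|]. exists d2. repeat split; auto; lra.
  - intros t s r Ht. split.
    + intros Hr. destruct (reaches_seq_inv final_stop Hr) as [[_ H1]|(s1 & r1 & H1 & H2)].
      * apply (adequate_stop A1) in H1; [|exact Ht]. destruct H1 as [-> Hs].
        split; [reflexivity|]. apply bind_traj_at. left. exact Hs.
      * apply (adequate_skip A1) in H1; [|exact Ht]. destruct H1 as (d1 & Hr1 & Hd1 & ->).
        apply (adequate_stop A2) in H2; [|lra]. destruct H2 as [-> Hs].
        split; [reflexivity|]. apply bind_traj_at. right. exists d1, s1. auto.
    + intros [-> Hs]. apply bind_traj_at in Hs.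
      destruct Hs as [Hs|(d1 & s1 & Hr1 & Hd1 & Hs)].
      * apply reaches_seq_stop. apply (adequate_stop A1); auto.
      * apply reaches_seq_skip with s1 (t - d1).
        -- apply (adequate_skip A1); [exact Ht|]. exists d1. repeat split; auto; lra.
        -- apply (adequate_stop A2); [lra|]. auto.
Qed.

Section WhileAdequacy.
Context {n : nat}.
Variable b : bexp n.
Variable p : prog n.
Hypothesis Ap : adequate p.

Lemma while_nsteps_inv {m sg t k s r} : 0 <= t -> final k ->
  nsteps m (CProg (While b p), sg, t) (k, s, r) ->
  (k = CSkip n -> exists d, loop_returns (beval b) (denot p) sg d s /\ d <= t /\ r = t - d) /\
  (k = CStop n -> r = 0 /\ loop_traj (beval b) (denot p) sg t s).
Proof.
  revert sg t k s r. induction m as [m IH] using lt_wf_ind. intros sg t k s r Ht Hk Hm.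
  destruct (nsteps_prog_final_inv Hk Hm) as (m' & k1 & s1 & t1 & -> & Hst & Hrest).
  inversion Hst; subst k1 s1 t1.
  - destruct (nsteps_seq_inv Hk Hrest) as [(-> & Hp)|(s2 & r2 & m2 & Hp & Hw & Hlt)].
    + apply (adequate_stop Ap) in Hp; [|exact Ht]. destruct Hp as [-> Hs].
      split; [discriminate|]. intros _. split; [reflexivity|].
      apply loop_traj_body; assumption.
    + apply (adequate_skip Ap) in Hp; [|exact Ht]. destruct Hp as (d1 & Hr1 & Hd1 & ->).
      destruct (IH m2 ltac:(lia) s2 (t - d1) k s r ltac:(lra) Hk Hw) as [Hskip Hstop].
      split.
      * intros Ek. destruct (Hskip Ek) as (d2 & Hl & Hd2 & ->). exists (d1 + d2).
        split; [eapply loop_returns_iter; eassumption|split; lra].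
      * intros Ek. destruct (Hstop Ek) as [-> Hl]. split; [reflexivity|].
        replace t with (d1 + (t - d1)) by lra. eapply loop_traj_iter; eassumption.
  - apply nsteps_from_final in Hrest; [|exact final_skip].
    destruct Hrest as [_ E]. inversion E; subst.
    split; [|discriminate]. intros _. exists 0.
    split; [apply loop_returns_exit; assumption|split; lra].
Qed.

Lemma loop_returns_reaches sg d s : loop_returns (beval b) (denot p) sg d s ->
  forall t, d <= t -> reaches (CProg (While b p), sg, t) (CSkip n) s (t - d).
Proof.
  induction 1 as [sg Hg|sg d1 s1 d2 s Hg Hr Hl IH]; intros t Hle.
  - rewrite (reaches_step_iff (st_while_false b p sg t Hg)) by exact final_skip.
    apply reaches_final_iff; [exact final_skip|]. repeat split. lra.
  - rewrite (reaches_step_iff (st_while_true b p sg t Hg)) by exact final_skip.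
    pose proof (loop_returns_nonneg _ _ Hl). pose proof (proj1 (returns_dom Hr)).
    apply reaches_seq_skip with s1 (t - d1).
    + apply (adequate_skip Ap); [lra|]. exists d1. repeat split; auto; lra.
    + replace (t - (d1 + d2)) with (t - d1 - d2) by lra. apply IH. lra.
Qed.

Lemma loop_traj_reaches sg t s : loop_traj (beval b) (denot p) sg t s ->
  reaches (CProg (While b p), sg, t) (CStop n) s 0.
Proof.
  induction 1 as [sg t s Hg Hs|sg d1 s1 t2 s Hg Hr Hl IH];
    rewrite (reaches_step_iff (st_while_true b p sg _ Hg)) by exact final_stop.
  - apply reaches_seq_stop. apply (adequate_stop Ap); [exact (traj_at_nonneg Hs)|]. auto.
  - pose proof (loop_traj_nonneg _ _ Hl). pose proof (proj1 (returns_dom Hr)).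
    apply reaches_seq_skip with s1 t2; [|exact IH].
    replace t2 with (d1 + t2 - d1) at 2 by lra.
    apply (adequate_skip Ap); [lra|]. exists d1. repeat split; auto; lra.
Qed.

Lemma adequate_while : adequate (While b p).
Proof.
  assert (Hden : forall sg, denot (While b p) sg = loop_sem (beval b) (denot p) sg).
  { intros sg. change (denot (While b p)) with (dagger (loop_step (beval b) (denot p))).
    rewrite dagger_loop_step; [reflexivity|exact (adequate_right_open Ap)]. }
  assert (Hopen := adequate_right_open Ap).
  split; intros sg; rewrite Hden; [apply loop_sem_right_open, Hopen| |];
    intros t s r Ht; split.
  - intros [m Hm]. destruct (proj1 (while_nsteps_inv Ht final_skip Hm) eq_refl) as (d & Hl & Hd).
    exists d. rewrite loop_sem_returns by exact Hopen. auto.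
  - intros (d & Hl & Hd & ->). apply loop_sem_returns in Hl; [|exact Hopen].
    apply loop_returns_reaches; assumption.
  - intros [m Hm]. destruct (proj2 (while_nsteps_inv Ht final_stop Hm) eq_refl) as [-> Hl].
    split; [reflexivity|]. apply loop_sem_traj_at; assumption.
  - intros [-> Hs]. apply loop_sem_traj_at in Hs; [|exact Hopen]. apply loop_traj_reaches. exact Hs.
Qed.

End WhileAdequacy.

Lemma adequate_denot {n} (p : prog n) : adequate p.
Proof.
  induction p.
  - apply adequate_assign.
  - apply adequate_ode.
  - apply adequate_seq; assumption.
  - apply adequate_ite; assumption.
  - apply adequate_while; assumption.
Qed.

Lemma returns_iff_Hconv {S X} (a : H S X) t (Ht : 0 <= t) x :
  returns a t x <-> exists h, a = Hconv t Ht h x.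
Proof.
  split.
  - destruct a as [d Hd e x'| |]; simpl; try contradiction. intros [-> ->].
    exists e. f_equal. apply proof_irrelevance.
  - intros [h ->]. simpl. auto.
Qed.

Lemma traj_at_iff_shape {S X} (a : H S X) t (Ht : 0 <= t) s : right_open a ->
  traj_at a t s <->
  (exists (t' : R) (Ht' : 0 <= t') (lt : t < t') (h : Dom (Pco (Fin_ t')) -> S) (x : X),
     h (exist _ t (conj Ht lt)) = s /\ a = Hconv t' Ht' h x) \/
  (exists (t' : ext) (Ht' : ext_nn t') (lt : ext_lt t t') (h : Dom (Pco t') -> S),
     h (exist _ t (conj Ht lt)) = s /\ a = Hdiv_open t' Ht' h).
Proof.
  intros Ha. split.
  - destruct a as [d Hd e x|D HD e|]; try contradiction; intros [[Ht0 Hlt] Hs];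
      replace Ht0 with Ht in Hs by apply proof_irrelevance.
    + left. exists d, Hd, Hlt, e, x. auto.
    + right. exists D, HD, Hlt, e. auto.
  - intros [(t' & Ht' & Hlt & h & x & Hs & ->)|(t' & Ht' & Hlt & h & Hs & ->)];
      exists (conj Ht Hlt); exact Hs.
Qed.

Theorem theorem5 (n : nat) (p : prog n) (sg sg' : env n) (t : R) (Ht : 0 <= t) :
  (steps (CProg p, sg, t) (CSkip n, sg', 0)
     <-> exists h : Dom (Pco (Fin_ t)) -> env n, denot p sg = Hconv t Ht h sg')
  /\
  (steps (CProg p, sg, t) (CStop n, sg', 0)
     <-> (exists (t' : R) (Ht' : 0 <= t') (lt : t < t')
                (h : Dom (Pco (Fin_ t')) -> env n) (sg'' : env n),
            h (exist _ t (conj Ht lt)) = sg' /\ denot p sg = Hconv t' Ht' h sg'')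
      \/ (exists (t' : ext) (Ht' : ext_nn t') (lt : ext_lt t t')
                (h : Dom (Pco t') -> env n),
            h (exist _ t (conj Ht lt)) = sg' /\ denot p sg = Hdiv_open t' Ht' h)).
Proof.
  destruct (adequate_denot p) as [Hopen Hskip Hstop].
  rewrite !steps_iff_reaches by (apply final_skip || apply final_stop).
  split.
  - rewrite Hskip, <- returns_iff_Hconv by exact Ht. split.
    + intros (d & Hr & Hd & E). replace t with d by lra. exact Hr.
    + intros Hr. exists t. repeat split; auto; lra.
  - rewrite Hstop, <- (traj_at_iff_shape _ _ Ht _ (Hopen sg)) by exact Ht. tauto.
Qed.
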